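(* Let $n\ge 2$ be an integer that is not a perfect square, and let $a,b$ be positive integers with $a^2-nb^2=-1$. Put $u=a+b\sqrt n$, and let $H_j/K_j$ be the convergents of the simple continued fraction expansion of $u^2$, with $H_{-1}=1$. Then $$\mathcal L\left(\frac1{u^2}\right)=\sum_{k=0}^{\infty}\left[\mathcal L\left(\frac{1}{nb^2(2H_{2k-1})^2}\right)+\mathcal L\left(\frac{1}{(2H_{2k+1}-H_{2k})^2}\right)\right].$$
   Context: $\mathcal L$ is the Rogers dilogarithm: for real $z\le1$, $\mathcal L(z)=\mathrm{Li}_2(z)+\tfrac12\log|z|\log(1-z)$, where $\mathrm{Li}_2(z)=\sum_{m\ge1}z^m/m^2$. If $v=[c_0,c_1,c_2,\dots]$ is the simple continued fraction expansion of $v$ ($c_0=\lfloor v\rfloor$, $c_i\ge1$ integers), the convergent numerators are defined by $H_{-2}=0,H_{-1}=1$, $H_i=c_iH_{i-1}+H_{i-2}$ for $i\ge0$, and denominators by $K_{-2}=1,K_{-1}=0$, $K_i=c_iK_{i-1}+K_{i-2}$, so that $[c_0,\dots,c_i]=H_i/K_i$. *)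

From Stdlib Require Import Reals ZArith ClassicalEpsilon.
Open Scope R_scope.

(* The limit of a real sequence (chosen classically; meaningful when it converges). *)
Definition seq_lim (u : nat -> R) : R :=
  epsilon (inhabits 0) (fun l => Un_cv u l).

Definition Li2 (z : R) : R :=
  seq_lim (fun N => sum_f_R0 (fun m => z ^ (S m) / (INR (S m)) ^ 2) N).

Definition RogersL (z : R) : R :=
  Li2 z + / 2 * ln (Rabs z) * ln (1 - z).

Definition Rfloor (x : R) : Z := Int_part x.

Fixpoint cf_x (v : R) (i : nat) : R :=
  match i with
  | O => v
  | S j => / (cf_x v j - IZR (Rfloor (cf_x v j)))
  end.

Definition cf_c (v : R) (i : nat) : Z := Rfloor (cf_x v i).

(* cf_HH v i = (H_{i-2}, H_{i-1}), with H_{-2} = 0, H_{-1} = 1,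
   H_i = c_i H_{i-1} + H_{i-2}. *)
Fixpoint cf_HH (v : R) (i : nat) : Z * Z :=
  match i with
  | O => (0%Z, 1%Z)
  | S j => let (p, q) := cf_HH v j in (q, (cf_c v j * q + p)%Z)
  end.

(* SHIFTED indexing: cfH v i = H_{i-1}.  So cfH v 0 = H_{-1} = 1,
   cfH v (j+1) = H_j for j >= 0. *)
Definition cfH (v : R) (i : nat) : Z := snd (cf_HH v i).

From Stdlib Require Import Reals ZArith Lra Lia Psatz ClassicalEpsilon.
From Coquelicot Require Import Coquelicot.
Open Scope R_scope.

(* On (0,1) the Rogers dilogarithm L is the power series of Li_2 plus
      (1/2) ln x ln(1 - x).  It is differentiable there, continuous at 0 with L(0) = 0,
      and satisfies the reflection formula L(x) + L(1 - x) = L(1) and Abel's five-term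
      relation; both follow from "zero derivative implies constant".
   2. Telescoping.  For 0 < q < 1 and the q-integers [k] = (1 - q^k)/(1 - q), the
      five-term relation at x = 1 - q^k/[k+1]^2, y = [k+1]/[k+2] writes L(q^k/[k+1]^2)
      as a difference of consecutive terms of P_i = L([i+1]/[i+2]) - L(1/[i+2]).  As
      P_i -> L(q), this gives L(q) = sum_(j >= 0) L(q^(j+1)/[j+2]^2).
   3. Continued fraction.  If w > 2 and w + 1/w = t + 2 with t an integer, then
      w = [t+1; 1, t, 1, t, ...], and its convergent numerators are S_k and S_(k+1) - S_k,
      where S_(k+2) = (t+2) S_(k+1) - S_k.  With q = 1/w the S_k are quotients of
      q-integers, which identifies the terms of the theorem with those of part 2.
   4. For u = a + b sqrt n with a^2 - n b^2 = -1, w = u^2 satisfies w + 1/w = 4a^2 + 2 and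
      n b^2 = a^2 + 1 = (1 + q)^2/(4q); grouping the series of part 2 in pairs proves the
      theorem. *)

Lemma seq_lim_unique (u : nat -> R) (l : R) : Un_cv u l -> seq_lim u = l.
Proof.
  intro Hl. unfold seq_lim.
  pose proof (epsilon_spec (inhabits 0) (fun l => Un_cv u l) (ex_intro _ l Hl)) as Hlim.
  exact (UL_sequence u _ l Hlim Hl).
Qed.

Lemma infinite_sum_ext (f g : nat -> R) (l : R) :
  (forall k, f k = g k) -> infinite_sum g l -> infinite_sum f l.
Proof.
  intros E H eps Heps. destruct (H eps Heps) as [N HN]. exists N. intros m Hm.
  rewrite (sum_eq f g m (fun k _ => E k)). exact (HN m Hm).
Qed.

Lemma infinite_sum_telescope (f g : nat -> R) (l : R) :
  (forall j, f j = g (S j) - g j) -> Un_cv g l -> infinite_sum f (l - g O).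
Proof.
  intros Hfg Hg.
  assert (Hsum : forall m, sum_f_R0 f m = g (S m) - g O)
    by (induction m as [|m IH]; simpl; rewrite Hfg; [ring | rewrite IH; ring]).
  intros eps Heps. destruct (Hg eps Heps) as [N HN]. exists N. intros m Hm.
  rewrite Hsum. unfold R_dist. replace (g (S m) - g O - (l - g O)) with (g (S m) - l) by ring.
  apply HN. lia.
Qed.

Lemma infinite_sum_pairs (f : nat -> R) (l : R) :
  infinite_sum f l -> infinite_sum (fun k => f (2 * k)%nat + f (2 * k + 1)%nat) l.
Proof.
  intros H.
  assert (Hsum : forall m, sum_f_R0 (fun k => f (2 * k)%nat + f (2 * k + 1)%nat) m =
                           sum_f_R0 f (2 * m + 1)).
  { induction m as [|m IH]; [simpl; ring |].
    rewrite (tech5 (fun k => f (2 * k)%nat + f (2 * k + 1)%nat)), IH.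
    replace (2 * S m + 1)%nat with (S (S (2 * m + 1))) by lia.
    replace (2 * S m)%nat with (S (2 * m + 1)) by lia.
    rewrite !tech5. ring. }
  intros eps Heps. destruct (H eps Heps) as [N HN]. exists N. intros m Hm.
  rewrite Hsum. apply HN. lia.
Qed.

Lemma CV_radius_bounded_coef (c : nat -> R) (x : R) :
  (forall k, Rabs (c k) <= 1) -> Rabs x < 1 -> Rbar_lt (Rabs x) (CV_radius c).
Proof.
  intros Hc Hx.
  set (r := (1 + Rabs x) / 2).
  assert (Hr : 0 <= r < 1) by (unfold r; pose proof (Rabs_pos x); lra).
  assert (Hdisk : CV_disk c r).
  { apply (@ex_series_le R_AbsRing R_CompleteNormedModule _ (fun k => r ^ k)).
    - intro k. unfold norm; simpl; unfold abs; simpl.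
      rewrite Rabs_Rabsolu, Rabs_mult, <- RPow_abs, (Rabs_right r) by lra.
      rewrite <- (Rmult_1_l (r ^ k)) at 2.
      apply Rmult_le_compat_r; [apply pow_le; lra | apply Hc].
    - exists (/ (1 - r)). apply is_series_geom. rewrite Rabs_right; lra. }
  apply Rbar_lt_le_trans with (Finite r); [simpl; unfold r; lra |].
  exact (proj1 (Lub_Rbar_correct (CV_disk c)) r Hdisk).
Qed.

Lemma const_of_deriv0 (f : R -> R) (lo hi : R) :
  (forall t, lo < t < hi -> derivable_pt_lim f t 0) ->
  forall x y, lo < x < hi -> lo < y < hi -> f x = f y.
Proof.
  intros Hd x y Hx Hy.
  assert (Hmin : lo < Rmin x y) by (apply Rmin_glb_lt; lra).
  assert (Hmax : Rmax x y < hi) by (apply Rmax_lub_lt; lra).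
  pose proof (Rmin_l x y). pose proof (Rmax_l x y).
  destruct (MVT_gen f x y (fun _ => 0)) as [c [_ Hc]].
  - intros t Ht. apply is_derive_Reals, Hd. lra.
  - intros t Ht. apply derivable_continuous_pt. exists 0. apply Hd. lra.
  - lra.
Qed.

Lemma zero_of_deriv0 (f : R -> R) :
  (forall t, 0 < t < 1 -> derivable_pt_lim f t 0) -> continuity_pt f 0 -> f 0 = 0 ->
  forall x, 0 < x < 1 -> f x = 0.
Proof.
  intros Hd Hc H0 x Hx.
  destruct (Req_dec (f x) 0) as [E | NE]; [exact E | exfalso].
  destruct (Hc (Rabs (f x)) (Rabs_pos_lt _ NE)) as [d [Hd0 Hnear]].
  set (t := Rmin (d / 2) (1 / 2)).
  assert (Ht : 0 < t <= d / 2 /\ t <= 1 / 2).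
  { unfold t. split; [split; [apply Rmin_glb_lt; lra | apply Rmin_l] | apply Rmin_r]. }
  assert (Eft : f t = f x) by (apply (const_of_deriv0 f 0 1); auto; lra).
  specialize (Hnear t). simpl in Hnear. unfold R_dist in Hnear.
  rewrite H0, !Rminus_0_r, Eft, Rabs_right in Hnear by lra.
  assert (Rabs (f x) < Rabs (f x)) by (apply Hnear; split; [split; [exact I | lra] | lra]).
  lra.
Qed.

Lemma ln_1m_deriv (x : R) : x < 1 -> derivable_pt_lim (fun t => ln (1 - t)) x (/ (1 - x) * -1).
Proof.
  intro Hx. apply is_derive_Reals. auto_derive; [lra | field; lra].
Qed.

(* Coefficients of Li_2(z) = sum_{k>=1} z^k/k^2 and of -ln(1-z)/z = sum_k z^k/(k+1). *)
Definition dilog_coef (k : nat) : R := match k with O => 0 | S m => / INR (S m) ^ 2 end.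
Definition log_coef (k : nat) : R := / INR (S k).

Lemma dilog_coef_bound (k : nat) : Rabs (dilog_coef k) <= 1.
Proof.
  destruct k as [|m]; [simpl; rewrite Rabs_R0; lra |].
  change (dilog_coef (S m)) with (/ INR (S m) ^ 2).
  assert (H1 : 1 <= INR (S m)) by (apply (le_INR 1); lia).
  rewrite Rabs_right by (apply Rle_ge, Rlt_le, Rinv_0_lt_compat; nra).
  rewrite <- Rinv_1. apply Rinv_le_contravar; [lra | nra].
Qed.

Lemma log_coef_bound (k : nat) : Rabs (log_coef k) <= 1.
Proof.
  unfold log_coef. assert (H1 : 1 <= INR (S k)) by (apply (le_INR 1); lia).
  rewrite Rabs_right by (apply Rle_ge, Rlt_le, Rinv_0_lt_compat; lra).
  rewrite <- Rinv_1. apply Rinv_le_contravar; lra.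
Qed.

Lemma dilog_radius (x : R) : Rabs x < 1 -> Rbar_lt (Rabs x) (CV_radius dilog_coef).
Proof. intro Hx. exact (CV_radius_bounded_coef _ x dilog_coef_bound Hx). Qed.

Lemma Li2_pseries (z : R) : Rabs z < 1 -> Li2 z = PSeries dilog_coef z.
Proof.
  intro Hz.
  pose proof (PSeries_correct _ _ (CV_radius_inside _ z (dilog_radius z Hz))) as Hser.
  apply is_series_Reals in Hser.
  unfold Li2. apply seq_lim_unique.
  assert (Hpartial : forall m, sum_f_R0 (fun k => z ^ S k / INR (S k) ^ 2) m =
                               sum_f_R0 (fun k => scal (pow_n z k) (dilog_coef k)) (S m)).
  { intro m. rewrite (sum_eq _ (fun k => z ^ k * dilog_coef k) _
                        (fun k _ => f_equal2 Rmult (pow_n_pow z k) eq_refl)).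
    induction m as [|m IH]; [simpl; field |].
    rewrite (tech5 (fun k => z ^ S k / INR (S k) ^ 2)), IH,
      (tech5 (fun k => z ^ k * dilog_coef k) (S m)).
    reflexivity. }
  intros eps Heps. destruct (Hser eps Heps) as [N HN]. exists N. intros m Hm. cbv beta.
  rewrite Hpartial. apply HN. lia.
Qed.

Lemma log_pseries (x : R) : Rabs x < 1 -> x * PSeries log_coef x = - ln (1 - x).
Proof.
  intro Hx. rewrite <- PSeries_incr_1.
  set (h := fun t => PSeries (PS_incr_1 log_coef) t + ln (1 - t)).
  assert (Hrad : forall t, Rabs t < 1 -> Rbar_lt (Rabs t) (CV_radius (PS_incr_1 log_coef))).
  { intros t Ht. apply CV_radius_bounded_coef; auto. intros [|k].
    - change (Rabs 0 <= 1). rewrite Rabs_R0. lra.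
    - apply log_coef_bound. }
  assert (Hd : forall t, -1 < t < 1 -> derivable_pt_lim h t 0).
  { intros t Ht.
    pose proof (is_derive_PSeries _ t (Hrad t ltac:(apply Rabs_def1; lra))) as D1.
    apply is_derive_Reals in D1.
    rewrite (PSeries_ext _ (fun _ => 1)) in D1 by
      (intro k; unfold PS_derive; simpl PS_incr_1; unfold log_coef; field; apply not_0_INR; lia).
    replace (PSeries (fun _ => 1) t) with (/ (1 - t)) in D1 by
      (symmetry; apply (is_pseries_unique (fun _ => 1) t);
       apply (is_series_ext (fun k => t ^ k));
       [intro k; rewrite <- pow_n_pow; symmetry; apply Rmult_1_r
       | apply is_series_geom; apply Rabs_def1; lra]).
    replace 0 with (/ (1 - t) + / (1 - t) * -1) by ring.
    apply (derivable_pt_lim_plus _ _ t _ _ D1 (ln_1m_deriv t ltac:(lra))). }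
  pose proof (const_of_deriv0 h (-1) 1 Hd x 0 ltac:(apply Rabs_def2 in Hx; lra) ltac:(lra)) as E.
  unfold h in E. rewrite PSeries_0 in E. simpl in E.
  rewrite Rminus_0_r, ln_1 in E. unfold zero in E; simpl in E. lra.
Qed.

Definition RogersP (z : R) : R := PSeries dilog_coef z + / 2 * ln (Rabs z) * ln (1 - z).
Definition RogersP' (x : R) : R := - / 2 * (ln (1 - x) / x + ln x / (1 - x)).

Lemma RogersL_P (z : R) : Rabs z < 1 -> RogersL z = RogersP z.
Proof. intro Hz. unfold RogersL, RogersP. rewrite Li2_pseries by exact Hz. reflexivity. Qed.

Lemma RogersP_0 : RogersP 0 = 0.
Proof. unfold RogersP. rewrite PSeries_0, Rminus_0_r, ln_1. simpl. ring. Qed.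

Lemma Li2_deriv (x : R) : 0 < x < 1 -> derivable_pt_lim (PSeries dilog_coef) x (- ln (1 - x) / x).
Proof.
  intro Hx.
  assert (Hx1 : Rabs x < 1) by (rewrite Rabs_right; lra).
  pose proof (is_derive_PSeries _ x (dilog_radius x Hx1)) as D.
  apply is_derive_Reals in D.
  rewrite (PSeries_ext _ log_coef) in D by
    (intro k; unfold PS_derive; change (dilog_coef (S k)) with (/ INR (S k) ^ 2);
     unfold log_coef; field; apply not_0_INR; lia).
  replace (- ln (1 - x) / x) with (PSeries log_coef x); [exact D |].
  rewrite <- log_pseries by exact Hx1. field. lra.
Qed.

Lemma RogersP_deriv (x : R) : 0 < x < 1 -> derivable_pt_lim RogersP x (RogersP' x).
Proof.
  intro Hx.
  assert (Dlog : derivable_pt_lim (fun t => / 2 * ln (Rabs t) * ln (1 - t)) x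
                   (/ 2 * / x * ln (1 - x) - / 2 * ln x / (1 - x))).
  { apply is_derive_Reals.
    apply (is_derive_ext_loc (fun t => / 2 * ln t * ln (1 - t))).
    - apply (locally_interval _ x 0 p_infty); [exact (proj1 Hx) | exact I |].
      intros t Ht _. simpl in Ht. rewrite Rabs_right by lra. reflexivity.
    - auto_derive; [repeat split; lra | unfold Rminus; field; lra]. }
  replace (RogersP' x) with (- ln (1 - x) / x + (/ 2 * / x * ln (1 - x) - / 2 * ln x / (1 - x)))
    by (unfold RogersP'; field; lra).
  exact (derivable_pt_lim_plus _ _ x _ _ (Li2_deriv x Hx) Dlog).
Qed.

Lemma RogersP_cont (x : R) : 0 < x < 1 -> continuity_pt RogersP x.
Proof. intro Hx. apply derivable_continuous_pt. exists (RogersP' x). exact (RogersP_deriv x Hx). Qed.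

Lemma ln_le_pred (s : R) : 0 < s -> ln s <= s - 1.
Proof. intro Hs. pose proof (exp_ineq1_le (ln s)) as H. rewrite exp_ln in H by exact Hs. lra. Qed.

Lemma x_ln_x_bound (s : R) : 0 < s < 1 -> s * Rabs (ln s) <= 2 * sqrt s.
Proof.
  intro Hs. set (r := sqrt s).
  assert (Hr0 : 0 < r) by (apply sqrt_lt_R0; lra).
  assert (Hrr : r * r = s) by (apply sqrt_sqrt; lra).
  assert (Hlns : ln s = 2 * ln r) by (rewrite <- Hrr, ln_mult by lra; ring).
  assert (Hlnr : ln r < 0) by (rewrite <- ln_1; apply ln_increasing; nra).
  pose proof (ln_le_pred (/ r) ltac:(apply Rinv_0_lt_compat; lra)) as Hinv.
  rewrite ln_Rinv in Hinv by lra.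
  assert (r * / r = 1) by (field; lra).
  rewrite Hlns, Rabs_left, <- Hrr by lra. nra.
Qed.

Lemma ln_1m_bound (z : R) : -1/2 <= z <= 1/2 -> Rabs (ln (1 - z)) <= 2 * Rabs z.
Proof.
  intro Hz.
  pose proof (ln_le_pred (1 - z) ltac:(lra)) as Hup.
  pose proof (ln_le_pred (/ (1 - z)) ltac:(apply Rinv_0_lt_compat; lra)) as Hlow.
  rewrite ln_Rinv in Hlow by lra.
  assert (Hq : / (1 - z) - 1 <= 2 * Rabs z).
  { replace (/ (1 - z) - 1) with (z / (1 - z)) by (field; lra).
    apply Rmult_le_reg_r with (1 - z); [lra |]. unfold Rdiv.
    rewrite Rmult_assoc, Rinv_l by lra.
    destruct (Rle_dec 0 z); [rewrite Rabs_right by lra | rewrite Rabs_left by lra]; nra. }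
  apply Rabs_le.
  destruct (Rle_dec 0 z); [rewrite Rabs_right in * by lra | rewrite Rabs_left in * by lra]; lra.
Qed.

Lemma ln_abs_ln_1m_cont0 : continuity_pt (fun z => ln (Rabs z) * ln (1 - z)) 0.
Proof.
  intros eps Heps. simpl. unfold R_dist.
  exists (Rmin (1/2) ((eps/4)^2)). split; [apply Rmin_glb_lt; nra |].
  intros z [[_ Hz0] Hz]. rewrite Rminus_0_r in Hz.
  rewrite Rminus_0_r, ln_1, Rmult_0_r, Rminus_0_r.
  assert (Hz1 : Rabs z < 1/2) by (eapply Rlt_le_trans; [exact Hz | apply Rmin_l]).
  assert (Hz2 : Rabs z < (eps/4)^2) by (eapply Rlt_le_trans; [exact Hz | apply Rmin_r]).
  assert (Hza : 0 < Rabs z) by (apply Rabs_pos_lt; auto).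
  pose proof (x_ln_x_bound (Rabs z) ltac:(lra)) as Bln.
  pose proof (ln_1m_bound z ltac:(apply Rabs_def2 in Hz1; lra)) as Bln1m.
  assert (Hsq : sqrt (Rabs z) < eps / 4).
  { rewrite <- (sqrt_pow2 (eps / 4)) by lra. apply sqrt_lt_1_alt. lra. }
  rewrite Rabs_mult.
  apply Rle_lt_trans with (Rabs (ln (Rabs z)) * (2 * Rabs z)).
  - apply Rmult_le_compat_l; [apply Rabs_pos | exact Bln1m].
  - lra.
Qed.

(* Hence L is continuous at 0, which fixes the constants in the functional equations. *)
Lemma RogersP_cont0 : continuity_pt RogersP 0.
Proof.
  apply (continuity_pt_ext (fun z => PSeries dilog_coef z + / 2 * (ln (Rabs z) * ln (1 - z))));
    [intro z; unfold RogersP; ring |].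
  apply continuity_pt_plus.
  - apply PSeries_continuity, dilog_radius. rewrite Rabs_R0. lra.
  - apply (continuity_pt_mult (fun _ => / 2)); [apply continuity_pt_const; intros ?; reflexivity |].
    exact ln_abs_ln_1m_cont0.
Qed.

(* Euler's reflection formula L(x) + L(1 - x) = L(1) on (0,1), with L(1) written as 2 L(1/2). *)
Definition RogersP_one : R := RogersP (1/2) + RogersP (1/2).

Lemma RogersP_reflection (x : R) : 0 < x < 1 -> RogersP x + RogersP (1 - x) = RogersP_one.
Proof.
  intro Hx. unfold RogersP_one. replace (1/2) with (1 - 1/2) at 2 by field.
  apply (const_of_deriv0 (fun t => RogersP t + RogersP (1 - t)) 0 1); [| lra | lra].
  intros t Ht.
  assert (Drefl : derivable_pt_lim (fun t => RogersP (1 - t)) t (RogersP' (1 - t) * -1)).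
  { apply (derivable_pt_lim_comp (fun t => 1 - t) RogersP); [| apply RogersP_deriv; lra].
    apply is_derive_Reals. auto_derive; [exact I | ring]. }
  replace 0 with (RogersP' t + RogersP' (1 - t) * -1)
    by (unfold RogersP'; replace (1 - (1 - t)) with t by ring; field; lra).
  exact (derivable_pt_lim_plus _ _ t _ _ (RogersP_deriv t Ht) Drefl).
Qed.

(* The two non-trivial arguments of Abel's five-term relation. *)
Definition five_A (x y : R) : R := x * (1 - y) / (1 - x * y).
Definition five_B (x y : R) : R := y * (1 - x) / (1 - x * y).

Lemma Rdiv_in_unit (a b : R) : 0 < a < b -> 0 < a / b < 1.
Proof.
  intro H. split; [apply Rdiv_lt_0_compat; lra |].
  apply Rmult_lt_reg_r with b; [lra |]. unfold Rdiv. rewrite Rmult_assoc, Rinv_l; lra.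
Qed.

Lemma five_args_bounds (x y : R) : 0 < x < 1 -> 0 < y < 1 ->
  0 < x * y < 1 /\ 0 < five_A x y < 1 /\ 0 < five_B x y < 1.
Proof.
  intros Hx Hy. split; [split; nra |].
  split; apply Rdiv_in_unit; split; nra.
Qed.

(* The derivative in x of L(x) + L(y) - L(xy) - L(A) - L(B) vanishes. *)
Lemma five_term_deriv0 (x y : R) : 0 < x < 1 -> 0 < y < 1 ->
  RogersP' x - RogersP' (x * y) * y - RogersP' (five_A x y) * ((1 - y) / (1 - x * y) ^ 2)
  - RogersP' (five_B x y) * (- y * (1 - y) / (1 - x * y) ^ 2) = 0.
Proof.
  intros Hx Hy.
  assert (Hxy : 0 < x * y < 1) by (split; nra).
  assert (EA : 1 - five_A x y = (1 - x) / (1 - x * y)) by (unfold five_A; field; lra).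
  assert (EB : 1 - five_B x y = (1 - y) / (1 - x * y)) by (unfold five_B; field; lra).
  assert (Lxy : ln (x * y) = ln x + ln y) by (apply ln_mult; lra).
  assert (LA : ln (five_A x y) = ln x + ln (1 - y) - ln (1 - x * y))
    by (unfold five_A; rewrite ln_div, ln_mult; lra || nra).
  assert (LB : ln (five_B x y) = ln y + ln (1 - x) - ln (1 - x * y))
    by (unfold five_B; rewrite ln_div, ln_mult; lra || nra).
  assert (LA' : ln (1 - five_A x y) = ln (1 - x) - ln (1 - x * y)) by (rewrite EA, ln_div; lra).
  assert (LB' : ln (1 - five_B x y) = ln (1 - y) - ln (1 - x * y)) by (rewrite EB, ln_div; lra).
  unfold RogersP'. rewrite Lxy, LA, LB, LA', LB', EA, EB.
  unfold five_A, five_B. field. repeat split; lra.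
Qed.

Lemma RogersP_five_term (x y : R) : 0 < x < 1 -> 0 < y < 1 ->
  RogersP x + RogersP y = RogersP (x * y) + RogersP (five_A x y) + RogersP (five_B x y).
Proof.
  intros Hx Hy.
  set (F t := RogersP t + RogersP y - RogersP (t * y) - RogersP (five_A t y) - RogersP (five_B t y)).
  enough (F x = 0) by (unfold F in *; lra).
  assert (Dmul : forall t, derivable_pt_lim (fun t => t * y) t y)
    by (intro t; apply is_derive_Reals; auto_derive; [exact I | ring]).
  assert (DA : forall t, 1 - t * y <> 0 ->
            derivable_pt_lim (fun t => five_A t y) t ((1 - y) / (1 - t * y) ^ 2))
    by (intros t Ht; apply is_derive_Reals; unfold five_A; auto_derive; [exact Ht | field; exact Ht]).
  assert (DB : forall t, 1 - t * y <> 0 ->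
            derivable_pt_lim (fun t => five_B t y) t (- y * (1 - y) / (1 - t * y) ^ 2))
    by (intros t Ht; apply is_derive_Reals; unfold five_B; auto_derive; [exact Ht | field; exact Ht]).
  assert (A0 : five_A 0 y = 0) by (unfold five_A; field; lra).
  assert (B0 : five_B 0 y = y) by (unfold five_B; field; lra).
  apply zero_of_deriv0; [| | | exact Hx].
  - intros t Ht.
    destruct (five_args_bounds t y Ht Hy) as [Hty [HA HB]].
    pose proof (derivable_pt_lim_comp _ RogersP t _ _ (Dmul t) (RogersP_deriv _ Hty)) as D1.
    pose proof (derivable_pt_lim_comp _ RogersP t _ _ (DA t ltac:(lra)) (RogersP_deriv _ HA)) as D2.
    pose proof (derivable_pt_lim_comp _ RogersP t _ _ (DB t ltac:(lra)) (RogersP_deriv _ HB)) as D3.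
    pose proof (derivable_pt_lim_plus _ _ t _ _ (RogersP_deriv t Ht)
                  (derivable_pt_lim_const (RogersP y) t)) as D0.
    rewrite <- (five_term_deriv0 t y Ht Hy).
    replace (RogersP' t) with (RogersP' t + 0) by ring.
    exact (derivable_pt_lim_minus _ _ t _ _
             (derivable_pt_lim_minus _ _ t _ _ (derivable_pt_lim_minus _ _ t _ _ D0 D1) D2) D3).
  - assert (C1 : continuity_pt (fun t => RogersP (t * y)) 0).
    { apply (continuity_pt_comp (fun t => t * y) RogersP);
        [apply derivable_continuous_pt; exists y; apply Dmul | rewrite Rmult_0_l; exact RogersP_cont0]. }
    assert (C2 : continuity_pt (fun t => RogersP (five_A t y)) 0).
    { apply (continuity_pt_comp (fun t => five_A t y) RogersP);
        [apply derivable_continuous_pt; eexists; apply DA; lra | rewrite A0; exact RogersP_cont0]. }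
    assert (C3 : continuity_pt (fun t => RogersP (five_B t y)) 0).
    { apply (continuity_pt_comp (fun t => five_B t y) RogersP);
        [apply derivable_continuous_pt; eexists; apply DB; lra |
         rewrite B0; exact (RogersP_cont y Hy)]. }
    pose proof (continuity_pt_plus _ _ 0 RogersP_cont0
                  (continuity_pt_const (fun _ => RogersP y) 0 (fun _ _ => eq_refl))) as C0.
    exact (continuity_pt_minus _ _ 0
             (continuity_pt_minus _ _ 0 (continuity_pt_minus _ _ 0 C0 C1) C2) C3).
  - unfold F. rewrite Rmult_0_l, A0, B0, RogersP_0. ring.
Qed.

Lemma RogersP_five_term_reflected (x y : R) : 0 < x < 1 -> 0 < y < 1 ->
  RogersP (1 - x) = (RogersP y - RogersP (five_B x y)) - (RogersP (x * y) - RogersP (1 - five_A x y)).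
Proof.
  intros Hx Hy. destruct (five_args_bounds x y Hx Hy) as [_ [HA _]].
  pose proof (RogersP_five_term x y Hx Hy).
  pose proof (RogersP_reflection x Hx). pose proof (RogersP_reflection _ HA). lra.
Qed.

(* A telescoping identity: if r1 < r2 < r3 satisfy r2 - r1 = Q and r1 r3 = r2^2 - Q
   (the shape of three consecutive q-integers), then L(Q/r2^2) is a difference of
   consecutive terms of i |-> L(r_i/r_(i+1)) - L(1/r_(i+1)). *)
Lemma RogersP_landen_step (r1 r2 r3 Q : R) :
  0 < Q -> 0 < r1 -> r2 < r3 -> r2 - r1 = Q -> r1 * r3 = r2 ^ 2 - Q ->
  RogersP (Q / r2 ^ 2) = (RogersP (r2 / r3) - RogersP (/ r3)) - (RogersP (r1 / r2) - RogersP (/ r2)).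
Proof.
  intros HQ Hr1 Hr23 Hr12 Hr13.
  assert (Hr3 : 0 < r3) by lra.
  assert (Hr2Q : 0 < r2 ^ 2 - Q) by nra.
  assert (E1 : r1 = r2 - Q) by lra.
  assert (E3 : r3 = (r2 ^ 2 - Q) / (r2 - Q))
    by (rewrite <- E1; apply (Rmult_eq_reg_l r1); [rewrite Hr13; field |]; lra).
  set (x := 1 - Q / r2 ^ 2). set (y := r2 / r3).
  assert (Hx : 0 < x < 1) by (unfold x; pose proof (Rdiv_in_unit Q (r2 ^ 2) ltac:(split; nra)); lra).
  assert (Hy : 0 < y < 1) by (apply Rdiv_in_unit; lra).
  pose proof (RogersP_five_term_reflected x y Hx Hy) as F.
  replace (1 - x) with (Q / r2 ^ 2) in F by (unfold x; ring).
  replace (x * y) with (r1 / r2) in F by (unfold x, y; rewrite E1, E3; field; repeat split; lra).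
  replace (five_B x y) with (/ r3) in F by (unfold five_B, x, y; rewrite E3; field; repeat split; nra).
  replace (1 - five_A x y) with (/ r2) in F
    by (unfold five_A, x, y; rewrite E3; field; repeat split; nra).
  exact F.
Qed.

Definition qint (q : R) (k : nat) : R := (1 - q ^ k) / (1 - q).

Section QIntegers.
Variable q : R.
Hypothesis Hq : 0 < q < 1.

Lemma pow_in_unit (k : nat) : 0 < q ^ S k < 1.
Proof.
  induction k as [|k IH]; [simpl; lra |].
  change (q ^ S (S k)) with (q * q ^ S k). split; nra.
Qed.

Lemma qint_1 : qint q 1 = 1.
Proof. unfold qint. field. lra. Qed.

Lemma qint_succ (k : nat) : qint q (S k) - qint q k = q ^ k.
Proof. unfold qint. simpl pow. field. lra. Qed.

Lemma qint_pos (k : nat) : 0 < qint q (S k).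
Proof.
  pose proof (pow_in_unit k). unfold qint. apply Rdiv_lt_0_compat; lra.
Qed.

Lemma qint_lt_succ (k : nat) : qint q k < qint q (S k).
Proof. pose proof (qint_succ k). pose proof (pow_lt q k (proj1 Hq)). lra. Qed.

(* q-analogue of (k+1)^2 - 1 = k (k+2). *)
Lemma qint_sq (k : nat) : qint q k * qint q (S (S k)) = qint q (S k) ^ 2 - q ^ k.
Proof. unfold qint. simpl pow. field. lra. Qed.

Definition landen_term (j : nat) : R := q ^ S j / qint q (S (S j)) ^ 2.

Lemma landen_term_in_unit (j : nat) : 0 < landen_term j < 1.
Proof.
  unfold landen_term. apply Rdiv_in_unit.
  pose proof (pow_in_unit j). pose proof (qint_pos j). pose proof (qint_pos (S (S j))).
  pose proof (qint_sq (S j)). split; nra.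
Qed.

Definition landen_partial (i : nat) : R :=
  RogersP (qint q (S i) / qint q (S (S i))) - RogersP (/ qint q (S (S i))).

Lemma landen_term_telescope (j : nat) :
  RogersP (landen_term j) = landen_partial (S j) - landen_partial j.
Proof.
  apply RogersP_landen_step.
  - apply pow_lt. lra.
  - apply qint_pos.
  - apply qint_lt_succ.
  - apply qint_succ.
  - apply qint_sq.
Qed.

Lemma landen_partial_0 : landen_partial 0 = 0.
Proof. unfold landen_partial. rewrite qint_1, Rdiv_1_l. ring. Qed.

(* As i -> oo, [i+1]_q/[i+2]_q -> 1 and 1/[i+2]_q -> 1 - q, so by reflection the
   partial sums tend to L(1) - L(0) - L(1 - q) = L(q). *)
Lemma landen_partial_lim : Un_cv landen_partial (RogersP q).
Proof.
  apply is_lim_seq_Reals.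
  assert (Hgeom : is_lim_seq (fun i => q ^ i) 0) by (apply is_lim_seq_geom; rewrite Rabs_right; lra).
  assert (Hden : forall c, is_lim_seq (fun i => 1 - c * q ^ i) 1).
  { intro c.
    pose proof (is_lim_seq_minus' _ _ _ _ (is_lim_seq_const 1)
                  (is_lim_seq_mult' _ _ _ _ (is_lim_seq_const c) Hgeom)) as H.
    rewrite Rmult_0_r, Rminus_0_r in H. exact H. }
  assert (Hsmall : is_lim_seq (fun i => 1 - qint q (S i) / qint q (S (S i))) 0).
  { apply (is_lim_seq_ext (fun i => 1 - (1 - q * q ^ i) / (1 - q * q * q ^ i))).
    - intro i. unfold qint. simpl pow. pose proof (pow_in_unit (S i)). simpl pow in *. field. lra.
    - replace 0 with (1 - 1 / 1) by field.
      apply is_lim_seq_minus'; [apply is_lim_seq_const | apply is_lim_seq_div'; auto; lra]. }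
  assert (Hinv : is_lim_seq (fun i => / qint q (S (S i))) (1 - q)).
  { apply (is_lim_seq_ext (fun i => (1 - q) / (1 - q * q * q ^ i))).
    - intro i. unfold qint. simpl pow. pose proof (pow_in_unit (S i)). simpl pow in *. field. lra.
    - pose proof (is_lim_seq_div' _ _ _ _ (is_lim_seq_const (1 - q)) (Hden (q * q)) R1_neq_R0) as H.
      rewrite Rdiv_1_r in H. exact H. }
  pose proof (is_lim_seq_continuous _ _ _ RogersP_cont0 Hsmall) as L1.
  pose proof (is_lim_seq_continuous _ _ _ (RogersP_cont (1 - q) ltac:(lra)) Hinv) as L2.
  pose proof (is_lim_seq_minus' _ _ _ _
                (is_lim_seq_minus' _ _ _ _ (is_lim_seq_const RogersP_one) L1) L2) as L.
  rewrite RogersP_0 in L.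
  replace (RogersP_one - 0 - RogersP (1 - q)) with (RogersP q) in L
    by (pose proof (RogersP_reflection q Hq); lra).
  revert L. apply is_lim_seq_ext. intro i.
  assert (Hratio : 0 < qint q (S i) / qint q (S (S i)) < 1)
    by (apply Rdiv_in_unit; split; [apply qint_pos | apply qint_lt_succ]).
  pose proof (RogersP_reflection _ Hratio). unfold landen_partial. lra.
Qed.

Lemma RogersL_landen_series : infinite_sum (fun j => RogersL (landen_term j)) (RogersL q).
Proof.
  apply (infinite_sum_ext _ (fun j => RogersP (landen_term j))).
  { intro j. apply RogersL_P. pose proof (landen_term_in_unit j). rewrite Rabs_right; lra. }
  rewrite RogersL_P by (rewrite Rabs_right; lra).
  replace (RogersP q) with (RogersP q - landen_partial O) by (rewrite landen_partial_0; ring).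
  exact (infinite_sum_telescope _ _ _ landen_term_telescope landen_partial_lim).
Qed.

End QIntegers.

(* The sequence S_0 = 1, S_1 = t + 2, S_(k+2) = (t + 2) S_(k+1) - S_k
   (Chebyshev polynomials of the second kind evaluated at (t + 2)/2). *)
Fixpoint chebU (t : Z) (k : nat) : Z :=
  match k with
  | O => 1
  | S O => t + 2
  | S ((S j) as k') => (t + 2) * chebU t k' - chebU t j
  end%Z.

Lemma chebU_SS (t : Z) (k : nat) : chebU t (S (S k)) = ((t + 2) * chebU t (S k) - chebU t k)%Z.
Proof. reflexivity. Qed.

Lemma cf_x_S (v : R) (i : nat) : cf_x v (S i) = / (cf_x v i - IZR (Rfloor (cf_x v i))).
Proof. reflexivity. Qed.

Lemma cf_HH_S (v : R) (j : nat) :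
  cf_HH v (S j) = (snd (cf_HH v j), (cf_c v j * snd (cf_HH v j) + fst (cf_HH v j))%Z).
Proof. simpl. destruct (cf_HH v j). reflexivity. Qed.

Lemma Rfloor_unique (x : R) (z : Z) : IZR z <= x < IZR z + 1 -> Rfloor x = z.
Proof.
  intro H. unfold Rfloor, Int_part.
  assert (E : (z + 1)%Z = up x) by (apply tech_up; rewrite plus_IZR; simpl; lra).
  lia.
Qed.

Section ContinuedFraction.
Variable w : R.
Variable t : Z.
Hypothesis Hw : 2 < w.
Hypothesis Hwt : w + / w = IZR t + 2.

(* 1/w = t + 2 - w is the fractional defect of w: it lies in (0, 1/2). *)
Lemma inv_w_bounds : 0 < / w < 1 / 2.
Proof.
  split; [apply Rinv_0_lt_compat; lra |].
  replace (1 / 2) with (/ 2) by field. apply Rinv_lt_contravar; lra.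
Qed.

Lemma cf_x_periodic (j : nat) :
  cf_x w (S (2 * j)) = / (1 - / w) /\ cf_x w (S (S (2 * j))) = w - 1.
Proof.
  pose proof inv_w_bounds as Hq.
  assert (F1 : Rfloor (/ (1 - / w)) = 1%Z).
  { apply Rfloor_unique. simpl. split.
    - rewrite <- Rinv_1. apply Rinv_le_contravar; lra.
    - replace (1 + 1) with (/ (1 / 2)) by field. apply Rinv_lt_contravar; nra. }
  assert (Ft : Rfloor (w - 1) = t) by (apply Rfloor_unique; lra).
  assert (E1 : / (/ (1 - / w) - IZR 1) = w - 1)
    by (simpl IZR; rewrite <- (Rinv_inv (w - 1)); f_equal; field; lra).
  assert (Hnext : forall i, cf_x w (S (2 * i)) = / (1 - / w) -> cf_x w (S (S (2 * i))) = w - 1)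
    by (intros i Hi; rewrite cf_x_S, Hi, F1; exact E1).
  assert (Hodd : cf_x w (S (2 * j)) = / (1 - / w)).
  { induction j as [|j IH].
    - rewrite cf_x_S. simpl cf_x.
      rewrite (Rfloor_unique w (t + 1)) by (rewrite plus_IZR; simpl; lra).
      rewrite plus_IZR. simpl IZR. f_equal. lra.
    - replace (2 * S j)%nat with (S (S (2 * j))) by lia.
      rewrite cf_x_S, (Hnext j IH), Ft. f_equal. lra. }
  split; [exact Hodd | exact (Hnext j Hodd)].
Qed.

Lemma cf_c_0 : cf_c w 0 = (t + 1)%Z.
Proof.
  pose proof inv_w_bounds. apply Rfloor_unique. rewrite plus_IZR. simpl. lra.
Qed.

Lemma cf_c_odd (j : nat) : cf_c w (S (2 * j)) = 1%Z.
Proof.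
  pose proof inv_w_bounds. unfold cf_c. rewrite (proj1 (cf_x_periodic j)).
  apply Rfloor_unique. simpl. split.
  - rewrite <- Rinv_1. apply Rinv_le_contravar; lra.
  - replace (1 + 1) with (/ (1 / 2)) by field. apply Rinv_lt_contravar; nra.
Qed.

Lemma cf_c_even (j : nat) : cf_c w (S (S (2 * j))) = t.
Proof.
  pose proof inv_w_bounds. unfold cf_c. rewrite (proj2 (cf_x_periodic j)).
  apply Rfloor_unique. lra.
Qed.

Lemma cf_HH_chebU (k : nat) :
  cf_HH w (S (2 * k)) = (chebU t k, (chebU t (S k) - chebU t k)%Z) /\
  cf_HH w (S (S (2 * k))) = ((chebU t (S k) - chebU t k)%Z, chebU t (S k)).
Proof.
  assert (Hnext : forall k, cf_HH w (S (2 * k)) = (chebU t k, (chebU t (S k) - chebU t k)%Z) ->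
            cf_HH w (S (S (2 * k))) = ((chebU t (S k) - chebU t k)%Z, chebU t (S k)))
    by (intros i Hi; rewrite cf_HH_S, Hi, cf_c_odd; cbn [fst snd]; f_equal; ring).
  enough (Hodd : cf_HH w (S (2 * k)) = (chebU t k, (chebU t (S k) - chebU t k)%Z))
    by exact (conj Hodd (Hnext k Hodd)).
  induction k as [|k IH].
  - change (S (2 * 0)) with 1%nat. rewrite cf_HH_S, cf_c_0. simpl. f_equal; ring.
  - replace (2 * S k)%nat with (S (S (2 * k))) by lia.
    rewrite cf_HH_S, (Hnext k IH), cf_c_even. cbn [fst snd]. f_equal. rewrite chebU_SS. ring.
Qed.

(* In the shifted indexing of [cfH]: H_(2k-1) = S_k and H_(2k) = S_(k+1) - S_k. *)
Lemma cfH_even (k : nat) : cfH w (2 * k) = chebU t k.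
Proof.
  destruct k as [|k]; [reflexivity |].
  unfold cfH. replace (2 * S k)%nat with (S (S (2 * k))) by lia.
  rewrite (proj2 (cf_HH_chebU k)). reflexivity.
Qed.

Lemma cfH_odd (k : nat) : cfH w (2 * k + 1) = (chebU t (S k) - chebU t k)%Z.
Proof.
  unfold cfH. replace (2 * k + 1)%nat with (S (2 * k)) by lia.
  rewrite (proj1 (cf_HH_chebU k)). reflexivity.
Qed.
End ContinuedFraction.

Lemma pow_2k (q : R) (k m : nat) : q ^ (2 * k + m) = q ^ k * q ^ k * q ^ m.
Proof. rewrite !pow_add. replace (2 * k)%nat with (k + k)%nat by lia. rewrite pow_add. ring. Qed.

(* With q + 1/q = t + 2 the S_k have the closed form S_k = (q^(-k-1) - q^(k+1))/(1/q - q),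
   i.e. S_k is a quotient of q-integers; this identifies the terms of the theorem with the
   Landen terms q^(j+1)/[j+2]_q^2 for j even and j odd. *)
Section ChebyshevClosedForm.
Variable q : R.
Variable t : Z.
Hypothesis Hq : 0 < q < 1.
Hypothesis Hqt : q + / q = IZR t + 2.

Lemma chebU_closed (k : nat) : IZR (chebU t k) * q ^ k * (1 - q ^ 2) = 1 - q ^ (2 * k + 2).
Proof.
  enough (H : IZR (chebU t k) * q ^ k * (1 - q ^ 2) = 1 - q ^ (2 * k + 2) /\
              IZR (chebU t (S k)) * q ^ S k * (1 - q ^ 2) = 1 - q ^ (2 * S k + 2))
    by exact (proj1 H).
  induction k as [|k [IH0 IH1]].
  - simpl chebU. rewrite plus_IZR, <- Hqt. simpl. split; [ring | field; lra].
  - split; [exact IH1 |].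
    rewrite chebU_SS, minus_IZR, mult_IZR, plus_IZR, <- Hqt.
    rewrite pow_2k in IH0, IH1 |- *. simpl pow in IH0, IH1 |- *.
    transitivity ((q * q + 1) * (IZR (chebU t (S k)) * (q * q ^ k) * (1 - q * (q * 1)))
                  - q * q * (IZR (chebU t k) * q ^ k * (1 - q * (q * 1)))); [field; lra |].
    rewrite IH0, IH1. ring.
Qed.

Lemma chebU_pair_closed (k : nat) :
  (IZR (chebU t (S k)) + IZR (chebU t k)) * q ^ S k * (1 - q) = 1 - q ^ (2 * k + 3).
Proof.
  apply (Rmult_eq_reg_l (1 + q)); [| lra].
  transitivity (IZR (chebU t (S k)) * q ^ S k * (1 - q ^ 2)
                + q * (IZR (chebU t k) * q ^ k * (1 - q ^ 2)));
    [simpl; ring |].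
  rewrite !chebU_closed, !pow_2k. simpl. ring.
Qed.

Lemma chebU_nonzero (k : nat) : IZR (chebU t k) <> 0.
Proof.
  intro H0. pose proof (chebU_closed k) as E. rewrite H0 in E.
  pose proof (pow_in_unit q Hq (2 * k + 1)). replace (S (2 * k + 1)) with (2 * k + 2)%nat in * by lia.
  lra.
Qed.

Lemma landen_term_even (k : nat) :
  landen_term q (2 * k) = / ((1 + q) ^ 2 / (4 * q) * (2 * IZR (chebU t k)) ^ 2).
Proof.
  pose proof (chebU_nonzero k). pose proof (pow_lt q k (proj1 Hq)).
  unfold landen_term, qint.
  replace (S (S (2 * k))) with (2 * k + 2)%nat by lia. rewrite <- chebU_closed.
  replace (S (2 * k)) with (2 * k + 1)%nat by lia. rewrite pow_2k.
  field. repeat split; nra.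
Qed.

Lemma landen_term_odd (k : nat) :
  landen_term q (2 * k + 1) = / (IZR (chebU t (S k)) + IZR (chebU t k)) ^ 2.
Proof.
  assert (Hsum : IZR (chebU t (S k)) + IZR (chebU t k) <> 0).
  { intro H0. pose proof (chebU_pair_closed k) as E. rewrite H0 in E.
    pose proof (pow_in_unit q Hq (2 * k + 2)). replace (S (2 * k + 2)) with (2 * k + 3)%nat in * by lia.
    lra. }
  pose proof (pow_lt q k (proj1 Hq)).
  unfold landen_term, qint.
  replace (S (S (2 * k + 1))) with (2 * k + 3)%nat by lia. rewrite <- chebU_pair_closed.
  replace (S (2 * k + 1)) with (2 * k + 2)%nat by lia. rewrite pow_2k.
  change (q ^ S k) with (q * q ^ k). field. repeat split; lra.
Qed.
End ChebyshevClosedForm.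

(* For a solution of the negative Pell equation a^2 - n b^2 = -1, the unit u = a + b sqrt n
   has inverse b sqrt n - a, hence u^2 + u^(-2) = (u - 1/u)^2 + 2 = 4 a^2 + 2. *)
Lemma pell_unit_square (a b n : R) : 0 <= n -> a ^ 2 - n * b ^ 2 = -1 ->
  (a + b * sqrt n) ^ 2 + / (a + b * sqrt n) ^ 2 = 4 * a ^ 2 + 2.
Proof.
  intros Hn Hpell.
  assert (Hs : sqrt n * sqrt n = n) by (apply sqrt_sqrt; exact Hn).
  assert (Hinv : (a + b * sqrt n) * (b * sqrt n - a) = 1)
    by (transitivity (b ^ 2 * (sqrt n * sqrt n) - a ^ 2); [ring | rewrite Hs; lra]).
  assert (Hu : a + b * sqrt n <> 0) by (intro H0; rewrite H0 in Hinv; lra).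
  replace (/ (a + b * sqrt n) ^ 2) with ((b * sqrt n - a) ^ 2)
    by (rewrite <- pow_inv; f_equal;
        apply (Rmult_eq_reg_l (a + b * sqrt n)); [rewrite Hinv; field |]; exact Hu).
  transitivity (2 * a ^ 2 + 2 * b ^ 2 * (sqrt n * sqrt n)); [ring | rewrite Hs; lra].
Qed.

(* The coefficient n b^2 = a^2 + 1 expressed through q = u^(-2). *)
Lemma pell_coefficient (A q : R) :
  0 < q -> q + / q = 4 * A ^ 2 + 2 -> (1 + q) ^ 2 / (4 * q) = A ^ 2 + 1.
Proof.
  intros Hq Hqa.
  replace ((1 + q) ^ 2 / (4 * q)) with ((q + / q + 2) / 4) by (field; lra).
  rewrite Hqa. field.
Qed.

(* The main theorem: w = u^2 satisfies w + 1/w = t + 2 with t = 4a^2, so the terms of the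
   series are the Landen terms of q = 1/w grouped in pairs. *)
Theorem theorem2 (n a b : Z)
  (hn : (2 <= n)%Z)
  (hsq : ~ exists m : Z, (m * m)%Z = n)
  (ha : (0 < a)%Z) (hb : (0 < b)%Z)
  (hpell : (a ^ 2 - n * b ^ 2 = -1)%Z) :
  let u := IZR a + IZR b * sqrt (IZR n) in
  infinite_sum
    (fun k : nat =>
       RogersL (/ (IZR n * IZR b ^ 2 * (2 * IZR (cfH (u ^ 2) (2 * k))) ^ 2))
     + RogersL (/ (2 * IZR (cfH (u ^ 2) (2 * k + 2)) - IZR (cfH (u ^ 2) (2 * k + 1))) ^ 2))
    (RogersL (/ u ^ 2)).
Proof.
  intro u.
  assert (HA : 1 <= IZR a) by (apply (IZR_le 1); lia).
  assert (HB : 1 <= IZR b) by (apply (IZR_le 1); lia).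
  assert (HN : 2 <= IZR n) by (apply (IZR_le 2); lia).
  assert (Hpell : IZR a ^ 2 - IZR n * IZR b ^ 2 = -1)
    by (rewrite !pow_IZR, <- mult_IZR, <- minus_IZR; exact (f_equal IZR hpell)).
  assert (Hsqrt : 1 < sqrt (IZR n)) by (rewrite <- sqrt_1; apply sqrt_lt_1_alt; lra).
  assert (Hu : 2 < u) by (unfold u; nra).
  set (w := u ^ 2).
  assert (Hw : 2 < w) by (unfold w; nra).
  assert (Hwa : w + / w = 4 * IZR a ^ 2 + 2) by (apply pell_unit_square; lra).
  set (q := / w).
  assert (Hq : 0 < q < 1) by (pose proof (inv_w_bounds w Hw); unfold q; lra).
  assert (Hqa : q + / q = 4 * IZR a ^ 2 + 2) by (unfold q; rewrite Rinv_inv; lra).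
  set (t := (4 * a * a)%Z).
  assert (Hwt : w + / w = IZR t + 2) by (unfold t; rewrite !mult_IZR; simpl; lra).
  assert (Hqt : q + / q = IZR t + 2) by (unfold t; rewrite !mult_IZR; simpl; lra).
  assert (Hc : IZR n * IZR b ^ 2 = (1 + q) ^ 2 / (4 * q))
    by (rewrite (pell_coefficient (IZR a) q) by lra; lra).
  apply (infinite_sum_ext _
           (fun k => RogersL (landen_term q (2 * k)) + RogersL (landen_term q (2 * k + 1)))).
  - intro k.
    replace (2 * k + 2)%nat with (2 * S k)%nat by lia.
    rewrite (cfH_even w t Hw Hwt), (cfH_even w t Hw Hwt), (cfH_odd w t Hw Hwt), minus_IZR, Hc.
    rewrite (landen_term_even q t Hq Hqt), (landen_term_odd q t Hq Hqt).
    do 3 f_equal. ring.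
  - exact (infinite_sum_pairs _ _ (RogersL_landen_series q Hq)).
Qed.
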